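(* Let $n\geq 3$ and consider the $n$-cycle scenario. A nondisturbing behavior $\{p_1,\dots,p_n\}$ for this scenario is logically contextual if and only if there exist an index $1\leq i\leq n$, a pair $(a,b)\in\{0,1\}^2$ and $(\alpha_1,\dots,\alpha_{n-2})\in\{0,1\}^{n-2}$ such that $p_i(a,b)>0$, $p_{i+1}(b,\alpha_1)=0$, $p_{i+j}(\lnot\alpha_{j-1},\alpha_j)=0$ for all $2\leq j\leq n-2$, and $p_{i+n-1}(\lnot\alpha_{n-2},a)=0$, where indices of $p$ are taken modulo $n$ (with values in $\{1,\dots,n\}$) and $\lnot x=1-x$.
   Context: The $n$-cycle scenario has measurements $M_1,\dots,M_n$, each with outcome set $O=\{0,1\}$, and contexts $C_i=\{M_i,M_{i+1}\}$, $i=1,\dots,n$, indices modulo $n$ (so $M_{n+1}=M_1$). A behavior is a family of probability distributions $p_i$ on $\{0,1\}^2$, where $p_i(x,y)$ is the probability that $M_i=x$ and $M_{i+1}=y$. It is nondisturbing if marginals agree on shared measurements: for every $i$ and $x\in\{0,1\}$, $\sum_y p_i(y,x)=\sum_y p_{i+1}(x,y)$. Let $\bar p_i(x,y)=1$ if $p_i(x,y)>0$ and $0$ otherwise. The behavior is logically noncontextual if there exists $\bar p:\{0,1\}^n\to\{0,1\}$ such that for every $i$ and $(x,y)$, $\max\{\bar p(t): t\in\{0,1\}^n,\ t_i=x,\ t_{i+1}=y\}=\bar p_i(x,y)$; otherwise it is logically contextual. *)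

From HB Require Import structures.
From mathcomp Require Import all_boot all_order all_algebra.
Set Implicit Arguments. Unset Strict Implicit. Unset Printing Implicit Defensive.
Import Order.TTheory GRing.Theory Num.Theory.
Local Open Scope ring_scope.

(* Measurements M_1..M_n are indexed by 'I_n (0-based); outcomes {0,1} = bool.
   A behavior p assigns to context i = {M_i, M_(i+1)} the function
   p i x y = probability that M_i = x and M_(i+1) = y. *)

Definition cshift (n : nat) (i : 'I_n) (k : nat) : 'I_n :=
  Ordinal (ltn_pmod (i + k)%N (leq_ltn_trans (leq0n i) (ltn_ord i))).

Definition behavior (R : realFieldType) (n : nat) := 'I_n -> bool -> bool -> R.

Definition is_distribution (R : realFieldType) (n : nat) (p : behavior R n) : Prop :=
  forall i : 'I_n,
    (forall x y, 0 <= p i x y) /\ \sum_(x : bool) \sum_(y : bool) p i x y = 1.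

Definition nondisturbing (R : realFieldType) (n : nat) (p : behavior R n) : Prop :=
  forall (i : 'I_n) (x : bool),
    \sum_(y : bool) p i y x = \sum_(y : bool) p (cshift i 1) x y.

Definition pbar (R : realFieldType) (n : nat) (p : behavior R n) (i : 'I_n) (x y : bool) : bool :=
  0 < p i x y.

Definition logically_noncontextual (R : realFieldType) (n : nat) (p : behavior R n) : Prop :=
  exists g : {ffun 'I_n -> bool} -> bool,
    forall (i : 'I_n) (x y : bool),
      [exists t : {ffun 'I_n -> bool},
          [&& t i == x, t (cshift i 1) == y & g t]] = pbar p i x y.

Definition logically_contextual (R : realFieldType) (n : nat) (p : behavior R n) : Prop :=
  ~ logically_noncontextual p.

From HB Require Import structures.
From mathcomp Require Import all_boot all_order all_algebra.
From mathcomp Require Import zify.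
From Stdlib Require Import Classical.

(* The support of a nondisturbing behavior can be followed both ways around
   the cycle: since the marginals agree, every outcome of positive probability
   of context i extends to one of context i+1 and to one of context i-1.
   Logical noncontextuality means that every support edge (i,a,b) lies on a
   closed walk through the supports of all contexts.  Walk greedily forward
   from (a,b).  If at some step both values are possible, the walk can be
   joined there to a walk built backwards from a; if every step is forced, the
   forced values ~~ alpha_j leave no way back to a, which is the obstruction of
   the statement.  Conversely, an obstruction forces every walk through (a,b)
   to end in an edge of probability zero. *)

Set Implicit Arguments.
Unset Strict Implicit.
Unset Printing Implicit Defensive.
Import Order.TTheory GRing.Theory Num.Theory.

Section CyclicChains.
Variables (E : nat -> bool -> bool -> bool) (N : nat) (a b : bool).

Definition chain (u : nat -> bool) : Prop :=
  forall m, m < N -> E m (u m) (u m.+1).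

Definition closed_chain (u : nat -> bool) : Prop :=
  [/\ u 0 = a, u 1 = b, u N = a & chain u].

Definition obstruction (alpha : nat -> bool) : Prop :=
  [/\ ~~ E 1 b (alpha 1),
      forall j, 2 <= j <= N - 2 -> ~~ E j (~~ alpha j.-1) (alpha j)
    & ~~ E (N - 1) (~~ alpha (N - 2)) a].

Lemma forced_succ m x y z : E m x y -> ~~ E m x z -> y = ~~ z.
Proof. by case: y; case: z => // ->. Qed.

Lemma branching_succ m x y z : E m x y -> E m x (~~ y) -> E m x z.
Proof. by case: y; case: z. Qed.

Hypothesis N_ge3 : 3 <= N.

Lemma closed_chain_obstruction_free u alpha :
  closed_chain u -> ~ obstruction alpha.
Proof.
case=> u0 u1 uN uc [obs1 obs_mid obs_last].
have forced j : 1 <= j <= N - 2 -> u j.+1 = ~~ alpha j.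
  elim: j => [//|j IH] /andP[_ jN].
  have [->|j_gt0] := posnP j.
    by apply: forced_succ obs1; rewrite -u1; apply: uc; lia.
  have u_j : u j.+1 = ~~ alpha j by apply: IH; lia.
  apply: forced_succ (obs_mid j.+1 _); last by lia.
  by rewrite /= -u_j; apply: uc; lia.
have u_last : u (N - 1) = ~~ alpha (N - 2).
  by rewrite (_ : N - 1 = (N - 2).+1) ?forced //; lia.
have N_pred : (N - 1).+1 = N by lia.
have := uc (N - 1); rewrite N_pred uN u_last leqnn (negbTE obs_last).
by move/(_ isT).
Qed.

Hypothesis E_succ : forall m x y, E m x y -> exists z, E m.+1 y z.
Hypothesis E_pred : forall m y z, E m.+1 y z -> exists x, E m x y.
Hypothesis E0ab : E 0 a b.
Hypothesis ENab : E N a b.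

Definition next_value m y := ~~ E m y false.
Definition prev_value m z := ~~ E m false z.

Lemma next_value_spec m y z : E m y z -> E m y (next_value m y).
Proof. by rewrite /next_value; case: z; case Ef: (E m y false). Qed.

Lemma prev_value_spec m x z : E m x z -> E m (prev_value m z) z.
Proof. by rewrite /prev_value; case: x; case Ef: (E m false z). Qed.

Fixpoint forward_walk (k : nat) : bool :=
  match k with
  | 0 => a
  | 1 => b
  | (k'.+1 as k1).+1 => next_value k1 (forward_walk k1)
  end.

Lemma forward_walk_chain k : E k (forward_walk k) (forward_walk k.+1).
Proof.
elim: k => [//|k IH].
by have [z Ez] := E_succ IH; apply: next_value_spec Ez.
Qed.

Fixpoint backward_steps (d : nat) : bool :=
  if d is d'.+1 then prev_value (N - d) (backward_steps d') else a.

Definition backward_walk k := backward_steps (N - k).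

Lemma backward_walkN : backward_walk N = a.
Proof. by rewrite /backward_walk subnn. Qed.

Lemma backward_walk_chain k :
  k < N -> E k (backward_walk k) (backward_walk k.+1).
Proof.
suff steps_chain d :
    d < N -> E (N - d.+1) (backward_steps d.+1) (backward_steps d).
  move=> kN; have := steps_chain (N - k.+1); rewrite /backward_walk.
  have -> : N - (N - k.+1).+1 = k by lia.
  have -> : (N - k.+1).+1 = N - k by lia.
  by apply; lia.
elim: d => [N_gt0|d IH dN].
  have N_pred : N = (N - 1).+1 by lia.
  have := ENab; rewrite {1}N_pred => /E_pred[x Ex].
  exact: prev_value_spec Ex.
have d_pred : N - d.+1 = (N - d.+2).+1 by lia.
have := IH (ltnW dN); rewrite d_pred => /E_pred[x Ex].
exact: prev_value_spec Ex.
Qed.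

Definition splice j k := if k <= j then forward_walk k else backward_walk k.

Lemma splice_closed j :
  1 <= j < N -> E j (forward_walk j) (backward_walk j.+1) ->
  closed_chain (splice j).
Proof.
case/andP=> j1 jN Ej; split=> [||| m mN]; rewrite /splice ?j1 //.
  by rewrite leqNgt jN backward_walkN.
case: (ltngtP m j) => [_|_|-> //].
  exact: forward_walk_chain.
exact: backward_walk_chain.
Qed.

Lemma closed_chain_or_obstruction :
  (exists u, closed_chain u) \/ obstruction (fun k => ~~ forward_walk k.+1).
Proof.
have [/existsP[[j jN] /andP[j1 Ej]]|no_splice] :=
  boolP [exists j : 'I_N,
           (1 <= j) && E j (forward_walk j) (backward_walk j.+1)].
  by left; exists (splice j); apply: splice_closed; rewrite ?j1.
have no_splice_at j :
    1 <= j < N -> ~~ E j (forward_walk j) (backward_walk j.+1).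
  case/andP=> j1 jN; move/existsPn: no_splice => /(_ (Ordinal jN)).
  by rewrite /= j1.
have unforced j :
    1 <= j <= N - 2 -> ~~ E j (forward_walk j) (~~ forward_walk j.+1).
  move=> jN; apply: contra (no_splice_at j _); last by lia.
  exact: branching_succ (forward_walk_chain j).
right; split.
- by apply: unforced; lia.
- by move=> j jN; rewrite negbK prednK; [apply: unforced|]; lia.
- have N_pred : (N - 1).+1 = N by lia.
  rewrite negbK (_ : (N - 2).+1 = N - 1); last by lia.
  by have := no_splice_at (N - 1); rewrite N_pred backward_walkN; apply; lia.
Qed.

End CyclicChains.

Section CyclicShift.
Variable n : nat.
Implicit Types i k : 'I_n.

Lemma cshift0 i : cshift i 0 = i.
Proof. by apply: val_inj; rewrite /= addn0 modn_small. Qed.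

Lemma cshiftD i m l : cshift (cshift i m) l = cshift i (m + l).
Proof. by apply: val_inj; rewrite /= modnDml addnA. Qed.

Lemma cshiftn i : cshift i n = i.
Proof. by apply: val_inj; rewrite /= modnDr modn_small. Qed.

Definition cdist i k : nat := (k + (n - i)) %% n.

Lemma cdist_lt i k : (cdist i k < n).
Proof. by rewrite ltn_mod (leq_ltn_trans (leq0n k) (ltn_ord k)). Qed.

Lemma cshift_cdist i k : cshift i (cdist i k) = k.
Proof.
apply: val_inj; rewrite /= modnDmr addnCA subnKC ?(ltnW (ltn_ord i)) //.
by rewrite modnDr modn_small.
Qed.

Lemma cdist_cshift i m : cdist i (cshift i m) = (m %% n).
Proof.
rewrite /cdist /= modnDml addnAC subnKC ?(ltnW (ltn_ord i)) //.
by rewrite modnDl.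
Qed.

End CyclicShift.

Local Open Scope ring_scope.

Lemma psumr_neq0_existsP (R : numDomainType) (I : finType) (F : I -> R) :
  (forall i, 0 <= F i) -> reflect (exists i, 0 < F i) (\sum_i F i != 0).
Proof.
move=> F_ge0; rewrite psumr_neq0 //.
by apply: (iffP hasP) => [[i _ Fi]|[i Fi]]; exists i; rewrite ?mem_index_enum.
Qed.

Section Support.
Variables (R : realFieldType) (n : nat) (p : behavior R n).
Hypothesis p_ge0 : forall i x y, 0 <= p i x y.
Hypothesis p_nd : nondisturbing p.

Lemma pbarN i x y : ~~ pbar p i x y = (p i x y == 0).
Proof. by rewrite /pbar lt0r p_ge0 andbT negbK. Qed.

Lemma pbar_succ i x y : pbar p i x y -> exists z, pbar p (cshift i 1) y z.
Proof.
move=> pxy; apply/psumr_neq0_existsP => //; rewrite -p_nd.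
by apply/psumr_neq0_existsP => //; exists x.
Qed.

Lemma pbar_pred i y z : pbar p (cshift i 1) y z -> exists x, pbar p i x y.
Proof.
move=> pyz; apply/psumr_neq0_existsP => //; rewrite p_nd.
by apply/psumr_neq0_existsP => //; exists z.
Qed.

(* Position m of a chain for [support_from i] stands for the measurement
   M_(i+m); positions 0 and n both stand for M_i. *)
Definition support_from i m := pbar p (cshift i m).

Lemma obstruction_support_zero i a b alpha :
  obstruction (support_from i) n a b alpha <->
  [/\ p (cshift i 1) b (alpha 1%N) = 0,
      forall j, (2 <= j <= n - 2)%N ->
        p (cshift i j) (~~ alpha j.-1) (alpha j) = 0
    & p (cshift i (n - 1)) (~~ alpha (n - 2)%N) a = 0].
Proof.
have zeroE m x y : ~~ support_from i m x y <-> p (cshift i m) x y = 0.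
  by rewrite /support_from pbarN; split=> /eqP.
by split=> -[obs1 obs_mid obs_last];
  split=> [|j /obs_mid/zeroE|]; try apply/zeroE.
Qed.

Hypothesis n_ge3 : (3 <= n)%N.

Lemma support_closed_chain_or_obstruction i x y :
  pbar p i x y ->
  (exists u, closed_chain (support_from i) n x y u) \/
  exists alpha, obstruction (support_from i) n x y alpha.
Proof.
move=> pxy.
have succ m x' y' :
    support_from i m x' y' -> exists z, support_from i m.+1 y' z.
  by rewrite /support_from -addn1 -cshiftD; apply: pbar_succ.
have pred m y' z :
    support_from i m.+1 y' z -> exists x', support_from i m x' y'.
  by rewrite /support_from -addn1 -cshiftD; apply: pbar_pred.
have supp0 : support_from i 0 x y by rewrite /support_from cshift0.
have suppn : support_from i n x y by rewrite /support_from cshiftn.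
have [closed|obs] := closed_chain_or_obstruction n_ge3 succ pred supp0 suppn.
  by left.
by right; eexists; exact: obs.
Qed.

End Support.

Section GlobalAssignments.
Variables (R : realFieldType) (n : nat) (p : behavior R n).

Definition consistent (t : {ffun 'I_n -> bool}) : bool :=
  [forall k, pbar p k (t k) (t (cshift k 1))].

Lemma logically_noncontextualP :
  logically_noncontextual p <->
  forall i x y, pbar p i x y ->
    exists t, [/\ consistent t, t i = x & t (cshift i 1) = y].
Proof.
split=> [[g gE] i x y | extend].
  rewrite -gE => /existsP[t /and3P[/eqP ti /eqP ti1 gt]].
  exists t; split=> //; apply/forallP => k.
  by rewrite -gE; apply/existsP; exists t; rewrite !eqxx gt.
exists consistent => i x y; apply/existsP/idP => [[t]|/extend[t [ct <- <-]]].
  by case/and3P=> /eqP<- /eqP<- /forallP.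
by exists t; rewrite !eqxx ct.
Qed.

Lemma consistent_closed_chain t i :
  consistent t ->
  closed_chain (support_from p i) n (t i) (t (cshift i 1))
    (fun m => t (cshift i m)).
Proof.
move/forallP=> ct; split; rewrite /= ?cshift0 ?cshiftn // => m _.
by have := ct (cshift i m); rewrite cshiftD addn1.
Qed.

Lemma closed_chain_consistent i x y u :
  closed_chain (support_from p i) n x y u ->
  exists t, [/\ consistent t, t i = x & t (cshift i 1) = y].
Proof.
case=> u0 u1 un uc.
have n_gt0 : (0 < n)%N := leq_ltn_trans (leq0n i) (ltn_ord i).
have u_mod m : (m <= n)%N -> u (m %% n)%N = u m.
  by case: (ltngtP m n) => // [/modn_small-> | ->] _; rewrite ?modnn ?u0 ?un.
pose t := [ffun k => u (cdist i k)].
have t_shift m : (m <= n)%N -> t (cshift i m) = u m.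
  by move=> mn; rewrite ffunE cdist_cshift u_mod.
exists t; split; last by rewrite t_shift.
- apply/forallP => k; have k_lt := cdist_lt i k.
  rewrite -(cshift_cdist i k) cshiftD addn1 !t_shift ?(ltnW k_lt) //.
  exact: uc.
- by rewrite -{1}(cshift0 i) t_shift.
Qed.

End GlobalAssignments.

Theorem theorem2 (R : realFieldType) (n : nat) (p : behavior R n) :
  (3 <= n)%N -> is_distribution p -> nondisturbing p ->
  (logically_contextual p <->
   exists (i : 'I_n) (a b : bool) (alpha : nat -> bool),
     [/\ 0 < p i a b,
         p (cshift i 1) b (alpha 1%N) = 0,
         (forall j : nat, (2 <= j <= n - 2)%N ->
            p (cshift i j) (~~ alpha j.-1) (alpha j) = 0)
       & p (cshift i (n - 1)) (~~ alpha (n - 2)%N) a = 0]).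
Proof.
move=> n_ge3 p_dist p_nd.
have p_ge0 i x y : 0 <= p i x y by case: (p_dist i).
split=> [contextual | [i [a [b [alpha [pab obs1 obs_mid obs_last]]]]] lnc].
  apply: NNPP => no_obstruction; apply/contextual/logically_noncontextualP.
  move=> i x y pxy.
  have [[u /closed_chain_consistent //] | [alpha obs]] :=
    support_closed_chain_or_obstruction p_ge0 p_nd n_ge3 pxy.
  case: no_obstruction; exists i, x, y, alpha.
  by case/(obstruction_support_zero p_ge0): obs => ? ? ?; split.
have [t [ct ta tb]] := (logically_noncontextualP p).1 lnc i a b pab.
have obs : obstruction (support_from p i) n a b alpha.
  by apply/(obstruction_support_zero p_ge0); split.
have := consistent_closed_chain i ct; rewrite ta tb => closed.
exact: (closed_chain_obstruction_free n_ge3 closed obs).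
Qed.
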